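(* Let $A,B\subseteq R_n$ be such that $\{j:\alpha^j\in A\}$ and $\{j:\alpha^j\in B\}$ are unions of $q$-cyclotomic cosets modulo $n$, and let $C_A$, $C_B$ be the cyclic codes of length $n$ over $\mathbb{F}_q$ with complete defining sets $A$, $B$ respectively. Let $d_A^{\perp}$ be the minimum distance of the dual of $C_A$ and $d_B$ the minimum distance of $C_B$, and suppose $d_A^{\perp}>d_B$. Then $\{j:\alpha^j\in AB\}$ is a union of $q$-cyclotomic cosets modulo $n$, and the cyclic code $C_{AB}$ of length $n$ over $\mathbb{F}_q$ with complete defining set $AB$ has $(d_A^{\perp}-d_B+1,\,d_B)$-locality.
   Context: Let $q$ be a prime power and $n$ a positive integer with $\gcd(n,q)=1$. Let $d$ be the multiplicative order of $q$ modulo $n$, $\alpha\in\mathbb{F}_{q^d}$ a primitive $n$-th root of unity, and $R_n=\{\alpha^j:0\le j\le n-1\}$. For $A,B\subseteq R_n$, $AB=\{\beta\gamma:\beta\in A,\gamma\in B\}$. If $Z\subseteq R_n$ is such that $\{j:\alpha^j\in Z\}$ is a union of $q$-cyclotomic cosets modulo $n$, the cyclic code of length $n$ over $\mathbb{F}_q$ with complete defining set $Z$ is the ideal generated by $\prod_{\beta\in Z}(x-\beta)\in\mathbb{F}_q[x]$ in $\mathbb{F}_q[x]/(x^n-1)$, identified with a subspace of $\mathbb{F}_q^n$ via coefficient vectors. Locality: for a linear code $C\subseteq\mathbb{F}^n$ and integers $r\ge1$, $\delta\ge2$, the $i$-th coordinate has $(r,\delta)$-locality if there is $S_i\subseteq\{1,\dots,n\}$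 with $i\in S_i$, $|S_i|\le r+\delta-1$ such that the punctured code $C|_{S_i}$ (restrictions of codewords to $S_i$) has minimum distance at least $\delta$ (the zero code having infinite minimum distance); $C$ has $(r,\delta)$-locality if every coordinate does. *)

From HB Require Import structures.
From mathcomp Require Import all_boot all_order all_algebra all_field.
Set Implicit Arguments. Unset Strict Implicit. Unset Printing Implicit Defensive.
Import GRing.Theory.
Local Open Scope ring_scope.

(* The q-cyclotomic coset of j modulo n is {j q^k mod n : k}.  A set J of
   residues mod n is a union of q-cyclotomic cosets iff it contains the coset
   of each of its elements. *)
Definition cyc_union (q n : nat) (J : {set 'I_n}) : Prop :=
  forall j : 'I_n, j \in J -> forall (k : nat) (j' : 'I_n),
    (j' : nat) = ((j * q ^ k) %% n)%N -> j' \in J.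

Definition in_Rn (L : fieldType) (n : nat) (alpha : L) (Z : seq L) : Prop :=
  forall x, x \in Z -> exists j : 'I_n, x = alpha ^+ j.

Definition expset (L : fieldType) (n : nat) (alpha : L) (Z : seq L) : {set 'I_n} :=
  [set j : 'I_n | alpha ^+ j \in Z].

Definition prodset (L : fieldType) (A B : seq L) : seq L :=
  [seq x * y | x <- A, y <- B].

(* prod_{beta in Z} (x - beta); as alpha is a primitive n-th root of unity,
   the alpha^j (j < n) are pairwise distinct, so this is the product over the
   elements of Z (when Z is contained in R_n). *)
Definition defpoly (L : fieldType) (n : nat) (alpha : L) (Z : seq L) : {poly L} :=
  \prod_(j : 'I_n | alpha ^+ j \in Z) ('X - (alpha ^+ j)%:P).

Definition rv2poly (F : fieldType) (n : nat) (c : 'rV[F]_n) : {poly F} :=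
  \sum_(i < n) c 0 i *: 'X^i.

(* The cyclic code of length n over F with complete defining set Z: the ideal
   generated by prod_{beta in Z}(x - beta) in F[x]/(x^n - 1), elements being
   represented by their reduced representatives (degree < n), identified with
   coefficient vectors.  The generator polynomial is computed in L[x]; the
   computation f*g mod (x^n-1) is carried out after embedding F[x] in L[x]. *)
Definition cyclic_code (F : finFieldType) (L : fieldExtType F) (n : nat)
  (alpha : L) (Z : seq L) (c : 'rV[F]_n) : Prop :=
  exists f : {poly F},
    map_poly (in_alg L) (rv2poly c)
    = (map_poly (in_alg L) f * defpoly n alpha Z) %% ('X^n - 1).

Definition dual_code (F : fieldType) (n : nat) (C : 'rV[F]_n -> Prop)
  (c : 'rV[F]_n) : Prop :=
  forall x, C x -> \sum_(i < n) c 0 i * x 0 i = 0.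

Definition hdist (F : fieldType) (n : nat) (S : {set 'I_n}) (x y : 'rV[F]_n) : nat :=
  #|[set i in S | x 0 i != y 0 i]|.

(* d is the minimum distance of C (C has two distinct codewords, so d is
   finite) *)
Definition is_min_dist (F : fieldType) (n : nat) (C : 'rV[F]_n -> Prop) (d : nat) : Prop :=
  (exists x y, [/\ C x, C y, x <> y & hdist setT x y = d]) /\
  (forall x y, C x -> C y -> x <> y -> (d <= hdist setT x y)%N).

(* (r, delta)-locality: every coordinate i lies in some S with
   |S| <= r + delta - 1 such that the punctured code C|_S has minimum
   distance >= delta (distinct restrictions to S differ in >= delta
   coordinates of S; vacuous for the zero code). *)
Definition has_locality (F : fieldType) (n : nat) (C : 'rV[F]_n -> Prop)
  (r delta : nat) : Prop :=
  forall i : 'I_n, exists S : {set 'I_n},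
    [/\ i \in S, (#|S| <= r + delta - 1)%N &
        forall x y, C x -> C y -> hdist S x y <> 0%N -> (delta <= hdist S x y)%N].

Arguments cyclic_code {F L} n alpha Z c.

From HB Require Import structures.
From mathcomp Require Import all_boot all_order all_algebra all_field.
From mathcomp Require Import ring zify.
Set Implicit Arguments. Unset Strict Implicit. Unset Printing Implicit Defensive.
Import GRing.Theory.
Local Open Scope ring_scope.

(* Write q = #|F| and, for a word c of length n, ev c z = sum_i c_i z^i.
   - Frobenius (x |-> x^q) fixes exactly F, so when {j : alpha^j in Z} is
     closed under j |-> q j the generator polynomial prod_{beta in Z}(X - beta)
     lies in F[X]; then c is in C_Z iff ev c vanishes on Z.
   - A dual codeword u of C_A is orthogonal to the L-span of C_A, which
     contains sum_i alpha^(m i) X^i whenever alpha^-m is not in A; hence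
     ev u (alpha^m) = 0 for such m ("dual spectrum").
   - By discrete Fourier inversion, if u has dual spectrum and c vanishes on
     AB, the coordinatewise product u * c vanishes on B, i.e. lies in C_B.
   - Given a coordinate i, rotate a minimum-weight dual word u so that its
     support S (|S| = d_A^perp) contains i.  For x, y in C_AB the distance of
     x and y on S is the weight of u * (x - y) in C_B: it is 0 or >= d_B. *)

Lemma ord_pos {n : nat} (i : 'I_n) : (0 < n)%N.
Proof. exact: leq_ltn_trans (leq0n i) (ltn_ord i). Qed.

(* m mod n as an element of 'I_n (i only witnesses that 'I_n is nonempty). *)
Definition ord_mod {n : nat} (i : 'I_n) (m : nat) : 'I_n :=
  Ordinal (ltn_pmod m (ord_pos i)).

Section Frobenius.
Variables (F : finFieldType) (L : fieldExtType F).

Definition frob (x : L) := x ^+ #|F|.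

(* Additivity is the Frobenius of characteristic p, iterated log_p q times. *)
Lemma frob_zmod : zmod_morphism frob.
Proof.
rewrite /frob => x y.
have [p _ pcharFp] := finPcharP F; rewrite (card_pprimeChar pcharFp).
elim: (logn _ _) => // k IHk; rewrite expnSr !exprM {}IHk.
by rewrite -(pchar_lalg L) in pcharFp; rewrite -pFrobenius_autE rmorphB.
Qed.

Lemma frob_monoid : monoid_morphism frob.
Proof. by rewrite /frob; split=> [|x y]; rewrite ?exprMn ?expr1n. Qed.

HB.instance Definition _ := GRing.isZmodMorphism.Build L L frob frob_zmod.
HB.instance Definition _ := GRing.isMonoidMorphism.Build L L frob frob_monoid.

(* Its fixed points are the elements of F (Fermat's little theorem in L). *)
Lemma frob_fixed (x : L) : frob x = x -> exists a : F, x = a%:A.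
Proof.
move=> fx; have : x \in (1%VS : {vspace L}).
  by rewrite Fermat's_little_theorem dimv1 expn1 -{2}fx.
by case/vlineP=> a ->; exists a.
Qed.

Lemma frob_fixed_poly (p : {poly L}) :
  map_poly frob p = p -> exists g : {poly F}, p = map_poly (in_alg L) g.
Proof.
move=> fp; have coefF k : exists a : F, p`_k == a%:A.
  have /frob_fixed[a ->] : frob p`_k = p`_k by rewrite -coef_map fp.
  by exists a.
exists (\poly_(k < size p) xchoose (coefF k)).
apply/polyP => k; rewrite coef_map coef_poly /=; case: ltnP => hk.
  exact/eqP/(xchooseP (coefF k)).
by rewrite nth_default // scale0r.
Qed.

End Frobenius.

Section GeneratorPolynomial.
Variables (F : finFieldType) (L : fieldExtType F) (n : nat) (alpha : L).
Hypothesis alpha_prim : n.-primitive_root alpha.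

Lemma alpha_expn : alpha ^+ n = 1.
Proof. exact: prim_expr_order. Qed.

Lemma alpha_exp_inj (i j : 'I_n) : alpha ^+ i = alpha ^+ j -> i = j.
Proof.
move/eqP; rewrite (eq_prim_root_expr alpha_prim) !modn_small //.
by move/eqP/val_inj.
Qed.

(* If q^d = 1 mod n (d > 0), then j |-> q j is a permutation of Z/nZ, so a
   q-closed exponent set is mapped onto itself and the generator polynomial
   prod_{alpha^j in Z} (X - alpha^j) is fixed by frob: it lies in F[X]. *)
Lemma defpoly_over (d : nat) (Z : seq L) :
  (0 < d)%N -> (#|F| ^ d = 1 %[mod n])%N -> cyc_union #|F| (expset n alpha Z) ->
  exists g : {poly F}, defpoly n alpha Z = map_poly (in_alg L) g.
Proof.
move=> d_gt0 qd qclosed; apply: frob_fixed_poly; set q := #|F|.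
have qdS : (q * q ^ d.-1 = 1 %[mod n])%N by rewrite -expnS prednK.
pose mulq (j : 'I_n) := ord_mod j (j * q).
have mulq_inj : injective mulq.
  move=> i j /(congr1 val) /= eqij; apply: val_inj => /=.
  rewrite -(modn_small (ltn_ord i)) -(modn_small (ltn_ord j)).
  by rewrite -[i : nat]muln1 -[j : nat]muln1 -!(modnMmr _ 1) -qdS !modnMmr
     !mulnA -modnMml eqij modnMml.
have mulqP j : (alpha ^+ mulq j \in Z) = (alpha ^+ j \in Z).
  have inJ i : (i \in expset n alpha Z) = (alpha ^+ i \in Z) by rewrite inE.
  rewrite -!inJ; apply/idP/idP => [Jqj | Jj]; last exact: (qclosed j Jj 1%N).
  apply: (qclosed (mulq j) Jqj d.-1).
  by rewrite /= modnMml -mulnA -modnMmr qdS modnMmr muln1 modn_small.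
rewrite /defpoly rmorph_prod [RHS](reindex_inj mulq_inj) /=.
apply: eq_big => [j | j _]; first by rewrite mulqP.
by rewrite rmorphB /= map_polyX map_polyC /= /frob -exprM (expr_mod _ alpha_expn).
Qed.

End GeneratorPolynomial.

Lemma alg_mul (F : fieldType) (L : fieldExtType F) (a b : F) :
  (a * b)%:A = a%:A * b%:A :> L.
Proof. exact: rmorphM (in_alg L) a b. Qed.

Section CyclicCodes.
Variables (F : finFieldType) (L : fieldExtType F) (n : nat) (alpha : L).
Hypothesis alpha_prim : n.-primitive_root alpha.

(* The value at z of the polynomial with coefficient vector c; at the n-th
   roots of unity this is the discrete Fourier transform of c. *)
Definition ev (c : 'rV[F]_n) (z : L) : L := \sum_(i < n) (c 0 i)%:A * z ^+ i.

Lemma coef_rv2poly (c : 'rV[F]_n) (i : 'I_n) : (rv2poly c)`_i = c 0 i.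
Proof.
rewrite /rv2poly coef_sum (bigD1 i) //= coefZ coefXn eqxx mulr1 big1 ?addr0 //.
by move=> k ki; rewrite coefZ coefXn eq_sym (inj_eq val_inj) (negbTE ki) mulr0.
Qed.

Lemma size_rv2poly (c : 'rV[F]_n) : (size (rv2poly c) <= n)%N.
Proof.
apply/leq_sizeP => k nk; rewrite coef_sum big1 // => i _.
by rewrite coefZ coefXn gtn_eqF ?mulr0 // (leq_trans (ltn_ord i) nk).
Qed.

Lemma horner_rv2poly (c : 'rV[F]_n) (z : L) :
  (map_poly (in_alg L) (rv2poly c)).[z] = ev c z.
Proof.
rewrite /rv2poly rmorph_sum horner_sum; apply: eq_bigr => i _.
by rewrite /= map_polyZ map_polyXn hornerZ hornerXn mulr_algl.
Qed.

Lemma ev_sub (c c' : 'rV[F]_n) (z : L) : ev (c - c') z = ev c z - ev c' z.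
Proof.
by rewrite /ev -sumrB; apply: eq_bigr => i _; rewrite !mxE scalerBl mulrBl.
Qed.

Lemma map_Xn_sub1 : ('X^n - 1 : {poly L}) = map_poly (in_alg L) ('X^n - 1).
Proof. by rewrite rmorphB /= map_polyXn rmorph1. Qed.

Lemma code0 (Z : seq L) : cyclic_code n alpha Z 0.
Proof.
exists 0; rewrite /rv2poly big1 => [|j _]; last by rewrite mxE scale0r.
by rewrite !rmorph0 mul0r mod0p.
Qed.

Lemma defpoly_dvd (Z : seq L) (p : {poly L}) :
  (forall j : 'I_n, alpha ^+ j \in Z -> root p (alpha ^+ j)) ->
  defpoly n alpha Z %| p.
Proof.
move=> rootsZ.
pose rs := [seq alpha ^+ val j | j <- enum (fun j : 'I_n => alpha ^+ j \in Z)].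
have -> : defpoly n alpha Z = \prod_(z <- rs) ('X - z%:P).
  by rewrite /defpoly big_map big_enum.
have [||r ->] := @uniq_roots_prod_XsubC _ p rs; last exact: dvdp_mull.
  by apply/allP => z /mapP [j]; rewrite mem_enum => Zj ->; apply: rootsZ.
rewrite uniq_rootsE map_inj_in_uniq ?enum_uniq //.
by move=> i j _ _; apply: alpha_exp_inj.
Qed.

Lemma code_roots (Z : seq L) (c : 'rV[F]_n) (beta : L) :
  in_Rn n alpha Z -> cyclic_code n alpha Z c -> beta \in Z -> ev c beta = 0.
Proof.
move=> ZRn [f cf] Zbeta; have [j bj] := ZRn _ Zbeta.
have bn : beta ^+ n = 1.
  by rewrite bj -exprM mulnC exprM (alpha_expn alpha_prim) expr1n.
rewrite -horner_rv2poly cf.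
have := divp_eq (map_poly (in_alg L) f * defpoly n alpha Z) ('X^n - 1).
move/(congr1 (horner^~ beta)); rewrite !hornerE bn subrr mulr0 add0r => <-.
rewrite /defpoly horner_prod (bigD1 j) -?bj //=.
by rewrite hornerXsubC subrr mul0r mulr0.
Qed.

Lemma code_of_roots (Z : seq L) (g : {poly F}) (w : 'rV[F]_n) :
  defpoly n alpha Z = map_poly (in_alg L) g ->
  (forall j : 'I_n, alpha ^+ j \in Z -> ev w (alpha ^+ j) = 0) ->
  cyclic_code n alpha Z w.
Proof.
move=> Zg wZ; have g_dvd : g %| rv2poly w.
  rewrite -(dvdp_map (in_alg L)) -Zg; apply: defpoly_dvd => j Zj.
  by rewrite /root horner_rv2poly wZ.
exists (rv2poly w %/ g); rewrite Zg -rmorphM divpK // modp_small //.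
rewrite map_Xn_sub1 !size_map_poly size_XnsubC ?(prim_order_gt0 alpha_prim) //.
by rewrite ltnS size_rv2poly.
Qed.

Lemma code_of_multiple (Z : seq L) (g f : {poly F}) :
  defpoly n alpha Z = map_poly (in_alg L) g ->
  cyclic_code n alpha Z (\row_(i < n) ((f * g) %% ('X^n - 1))%R`_i).
Proof.
move=> Zg; exists f; rewrite Zg -rmorphM map_Xn_sub1 -map_modp; congr map_poly.
have n_gt0 := prim_order_gt0 alpha_prim.
have size_mod : (size ((f * g) %% ('X^n - 1))%R <= n)%N.
  have := ltn_modp (f * g) ('X^n - 1).
  by rewrite -size_poly_eq0 !size_XnsubC // ltnS => ->.
apply/polyP => k; case: (ltnP k n) => [kn | nk].
  by rewrite -[k]/(nat_of_ord (Ordinal kn)) coef_rv2poly mxE.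
by rewrite !nth_default // ?(leq_trans (size_rv2poly _) nk) ?(leq_trans size_mod nk).
Qed.

End CyclicCodes.

Section DiscreteFourier.
Variables (F : finFieldType) (L : fieldExtType F) (n : nat) (alpha : L).
Hypothesis alpha_prim : n.-primitive_root alpha.

Lemma alpha_neq0 : alpha != 0.
Proof. by rewrite (prim_root_eq0 alpha_prim) -lt0n (prim_order_gt0 alpha_prim). Qed.

Lemma sum_root_powers (z : L) : z ^+ n = 1 -> z != 1 -> \sum_(i < n) z ^+ i = 0.
Proof.
move=> zn z1; have := subrX1 z n; rewrite zn subrr => /esym /eqP.
by rewrite mulf_eq0 subr_eq0 (negbTE z1) => /eqP.
Qed.

Lemma fourier_inversion (u : 'rV[F]_n) (i : 'I_n) :
  \sum_(m < n) ev u (alpha ^+ m) * ((alpha ^+ m)^-1) ^+ i = n%:R * (u 0 i)%:A.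
Proof.
have an := alpha_expn alpha_prim.
have ai : alpha ^+ i != 0 by rewrite expf_neq0 ?alpha_neq0.
rewrite /ev; under eq_bigr do rewrite mulr_suml; rewrite exchange_big /=.
have inner (j : 'I_n) :
    \sum_(m < n) (u 0 j)%:A * (alpha ^+ m) ^+ j * ((alpha ^+ m)^-1) ^+ i
  = (u 0 j)%:A * \sum_(m < n) (alpha ^+ j / alpha ^+ i) ^+ m.
  rewrite mulr_sumr; apply: eq_bigr => m _.
  rewrite -mulrA exprMn; congr (_ * (_ * _)); first exact: exprAC.
  by rewrite !exprVn exprAC.
under eq_bigr do rewrite inner.
rewrite (bigD1 i) //= [X in _ + X]big1 ?addr0 => [|j ji].
  rewrite mulfV // (eq_bigr (fun=> 1)) => [|m _]; last exact: expr1n.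
  by rewrite sumr_const card_ord mulrC mulr_natl.
rewrite sum_root_powers ?mulr0 //.
  by rewrite exprMn -exprM mulnC exprM an expr1n exprVn exprAC an expr1n invr1 mulr1.
apply: contra ji => /eqP ji; apply/eqP/(alpha_exp_inj alpha_prim).
by rewrite -[alpha ^+ j](divfK ai) ji mul1r.
Qed.

(* Cyclic rotation of coordinates by s: (rot u s)_(j + s) = u_j. *)
Definition ord_add (s j : 'I_n) : 'I_n := ord_mod s (j + s).
Definition ord_sub (s j : 'I_n) : 'I_n := ord_mod s (j + (n - s)).
Definition rot (u : 'rV[F]_n) (s : 'I_n) : 'rV[F]_n := \row_j u 0 (ord_sub s j).

Lemma ord_addK (s : 'I_n) : cancel (ord_add s) (ord_sub s).
Proof.
move=> j; apply: val_inj => /=.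
by rewrite modnDml -addnA subnKC ?(ltnW (ltn_ord s)) // modnDr modn_small.
Qed.

Lemma ord_subK (s : 'I_n) : cancel (ord_sub s) (ord_add s).
Proof.
move=> j; apply: val_inj => /=.
by rewrite modnDml -addnA subnK ?(ltnW (ltn_ord s)) // modnDr modn_small.
Qed.

Lemma ord_add_sub (j i : 'I_n) : ord_add (ord_sub j i) j = i.
Proof.
apply: val_inj => /=.
by rewrite modnDmr addnCA subnKC ?(ltnW (ltn_ord j)) // modnDr modn_small.
Qed.

Lemma card_rot_support (u : 'rV[F]_n) (s : 'I_n) :
  #|[set j | rot u s 0 j != 0]| = #|[set j | u 0 j != 0]|.
Proof.
have -> : [set j | rot u s 0 j != 0] = ord_sub s @^-1: [set j | u 0 j != 0].
  by apply/setP => j; rewrite !inE mxE.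
exact/card_preimset/(can_inj (ord_subK s)).
Qed.

Lemma ev_rot (u : 'rV[F]_n) (s : 'I_n) (z : L) :
  z ^+ n = 1 -> ev (rot u s) z = z ^+ s * ev u z.
Proof.
move=> zn; rewrite /ev (reindex (ord_add s)); last first.
  by exists (ord_sub s) => j _; [apply: ord_addK | apply: ord_subK].
rewrite mulr_sumr; apply: eq_bigr => j _.
by rewrite mxE ord_addK /= (expr_mod _ zn) exprD; ring.
Qed.

(* The transform of u vanishes at alpha^m whenever alpha^-m is outside A;
   this is the spectral description of the dual of C_A. *)
Definition dual_spectrum (A : seq L) (u : 'rV[F]_n) : Prop :=
  forall m : nat, (alpha ^+ m)^-1 \notin A -> ev u (alpha ^+ m) = 0.

Lemma dual_spectrum_rot (A : seq L) (u : 'rV[F]_n) (s : 'I_n) :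
  dual_spectrum A u -> dual_spectrum A (rot u s).
Proof.
move=> uA m mA; rewrite ev_rot ?uA ?mulr0 //.
by rewrite -exprM mulnC exprM (alpha_expn alpha_prim) expr1n.
Qed.

Definition hadamard (u c : 'rV[F]_n) : 'rV[F]_n := \row_j (u 0 j * c 0 j).

(* Expand u by Fourier inversion; each term is a value
   ev c (alpha^-m gamma) with alpha^-m in A, or is killed by ev u. *)
Lemma hadamard_roots (A B : seq L) (u c : 'rV[F]_n) (gamma : L) :
  dual_spectrum A u -> (forall z, z \in prodset A B -> ev c z = 0) ->
  gamma \in B -> ev (hadamard u c) gamma = 0.
Proof.
move=> uA cAB Bgamma.
have nz : (n%:R : L) != 0 := prim_root_natf_neq0 alpha_prim.
apply: (mulfI nz); rewrite mulr0 /ev mulr_sumr.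
transitivity (\sum_(i < n) (c 0 i)%:A * gamma ^+ i * (n%:R * (u 0 i)%:A)).
  by apply: eq_bigr => i _; rewrite mxE alg_mul; ring.
under eq_bigr do rewrite -fourier_inversion mulr_sumr.
rewrite exchange_big /= big1 // => m _.
transitivity (ev u (alpha ^+ m) * ev c ((alpha ^+ m)^-1 * gamma)).
  by rewrite /ev mulr_sumr; apply: eq_bigr => i _; rewrite exprMn; ring.
have [mA | mA] := boolP ((alpha ^+ m)^-1 \in A); last by rewrite uA ?mul0r.
by rewrite cAB ?mulr0 //; apply/allpairsP; exists ((alpha ^+ m)^-1, gamma).
Qed.

End DiscreteFourier.

(* L[X] is spanned over L by F[X]: expand each coefficient in an F-basis
   of L. *)
Lemma poly_over_basis (F : fieldType) (L : fieldExtType F) (h : {poly L}) :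
  exists f : 'I_(\dim {: L}) -> {poly F},
    h = \sum_(t < \dim {: L}) (vbasis {: L})`_t *: map_poly (in_alg L) (f t).
Proof.
exists (fun t => \poly_(k < size h) coord (vbasis {: L}) t h`_k).
apply/polyP => k; rewrite coef_sum.
under eq_bigr do rewrite coefZ coef_map coef_poly /=.
case: ltnP => hk; last first.
  by rewrite nth_default // big1 // => t _; rewrite scale0r mulr0.
rewrite {1}(coord_vbasis (memvf h`_k)); apply: eq_bigr => t _.
by rewrite mulrC mulr_algl.
Qed.

Section DualCode.
Variables (F : finFieldType) (L : fieldExtType F) (n : nat) (alpha : L).
Hypothesis alpha_prim : n.-primitive_root alpha.

Lemma dual_orthogonal (A : seq L) (gA : {poly F}) (u : 'rV[F]_n) (h : {poly L}) :
  defpoly n alpha A = map_poly (in_alg L) gA ->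
  dual_code (cyclic_code n alpha A) u ->
  \sum_(i < n) (u 0 i)%:A * ((h * defpoly n alpha A) %% ('X^n - 1))`_i = 0.
Proof.
move=> Ag uA; have [f ->] := poly_over_basis h; set b := vbasis {: L}.
pose p t : {poly F} := (f t * gA) %% ('X^n - 1).
have modE :
    ((\sum_(t < \dim {: L}) b`_t *: map_poly (in_alg L) (f t)) * defpoly n alpha A)
      %% ('X^n - 1) = \sum_(t < \dim {: L}) b`_t *: map_poly (in_alg L) (p t).
  rewrite mulr_suml (big_morph _ (modpD _) (mod0p _)); apply: eq_bigr => t _.
  by rewrite -scalerAl modpZl Ag -rmorphM (map_Xn_sub1 _ n) -map_modp.
rewrite modE; under eq_bigr do rewrite coef_sum mulr_sumr.
rewrite exchange_big big1 //= => t _.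
have orth : \sum_(i < n) u 0 i * (p t)`_i = 0.
  rewrite -[RHS](uA _ (code_of_multiple alpha_prim (f t) Ag)).
  by apply: eq_bigr => i _; rewrite mxE.
transitivity (b`_t * (\sum_(i < n) u 0 i * (p t)`_i)%:A).
  rewrite scaler_suml mulr_sumr; apply: eq_bigr => i _.
  by rewrite coefZ coef_map /= alg_mul; ring.
by rewrite orth scale0r mulr0.
Qed.

(* Indeed sum_i alpha^(m i) X^i vanishes on A, so it is an
   L-multiple of the generator, and its pairing with u is ev u (alpha^m). *)
Lemma dual_code_spectrum (A : seq L) (gA : {poly F}) (u : 'rV[F]_n) :
  defpoly n alpha A = map_poly (in_alg L) gA ->
  dual_code (cyclic_code n alpha A) u -> dual_spectrum alpha A u.
Proof.
move=> Ag uA m mA; set z := alpha ^+ m.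
have an := alpha_expn alpha_prim.
have zn : z ^+ n = 1 by rewrite /z -exprM mulnC exprM an expr1n.
have z0 : z != 0 by rewrite expf_neq0 // (alpha_neq0 alpha_prim).
pose vp : {poly L} := \poly_(i < n) z ^+ i.
have vp_mult : defpoly n alpha A %| vp.
  apply: defpoly_dvd => // j Aj; rewrite /root horner_poly.
  under eq_bigr do rewrite -exprMn.
  apply/eqP/sum_root_powers.
    by rewrite exprMn zn -exprM mulnC exprM an expr1n mul1r.
  apply: contraNneq mA => zaj1.
  by rewrite -[z^-1]mulr1 -zaj1 mulKf.
have [h vpE] := dvdpP _ _ vp_mult.
have vp_small : vp %% ('X^n - 1) = vp.
  by rewrite modp_small // size_XnsubC ?(prim_order_gt0 alpha_prim) // ltnS size_poly.
rewrite -(dual_orthogonal h Ag uA) -vpE vp_small /ev.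
by apply: eq_bigr => i _; rewrite coef_poly ltn_ord.
Qed.

End DualCode.

Lemma dual_min_word (F : fieldType) (n : nat) (C : 'rV[F]_n -> Prop) (d : nat) :
  is_min_dist (dual_code C) d ->
  exists u : 'rV[F]_n, [/\ dual_code C u, u != 0 & #|[set j | u 0 j != 0]| = d].
Proof.
move=> [[x [y [Dx Dy xy <-]]] _]; exists (x - y); split.
- move=> c Cc; under eq_bigr do rewrite !mxE mulrBl.
  by rewrite sumrB Dx // Dy // subrr.
- by rewrite subr_eq0; apply/eqP.
- by apply: eq_card => j; rewrite !inE !mxE subr_eq0.
Qed.

Section Locality.
Variables (F : finFieldType) (L : fieldExtType F) (n : nat) (alpha : L).
Hypothesis alpha_prim : n.-primitive_root alpha.

Lemma in_Rn_prodset (A B : seq L) :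
  in_Rn n alpha A -> in_Rn n alpha B -> in_Rn n alpha (prodset A B).
Proof.
move=> ARn BRn x /allpairsP [[a b] [/= Aa Bb ->]].
have [i ->] := ARn _ Aa; have [j ->] := BRn _ Bb.
by exists (ord_mod i (i + j)); rewrite /= (expr_mod _ (alpha_expn alpha_prim)) exprD.
Qed.

Lemma prodset_closed (k : nat) (A B : seq L) :
  in_Rn n alpha A -> in_Rn n alpha B ->
  cyc_union k (expset n alpha A) -> cyc_union k (expset n alpha B) ->
  cyc_union k (expset n alpha (prodset A B)).
Proof.
have an := alpha_expn alpha_prim.
move=> ARn BRn kA kB j; rewrite inE => /allpairsP [[a b] [/= Aa Bb ab]] m j' j'E.
have [ia ea] := ARn _ Aa; have [ib eb] := BRn _ Bb.
have kclosed (Z : seq L) (i : 'I_n) : cyc_union k (expset n alpha Z) ->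
    alpha ^+ i \in Z -> alpha ^+ ((i * k ^ m) %% n) \in Z.
  move=> kZ Zi; have := kZ i _ m (ord_mod i (i * k ^ m)) erefl.
  by rewrite !inE; apply.
rewrite inE; apply/allpairsP.
exists (alpha ^+ ((ia * k ^ m) %% n), alpha ^+ ((ib * k ^ m) %% n)); split.
- by apply: kclosed; rewrite // -ea.
- by apply: kclosed; rewrite // -eb.
by rewrite /= j'E !(expr_mod _ an) !exprM -exprMn -ea -eb -ab.
Qed.

(* For a coordinate i,
   rotate u so that its support S contains i; for codewords x, y of C_AB
   the word u * (x - y) lies in C_B and its weight is the distance of x
   and y on S. *)
Lemma locality_from_dual_word (A B : seq L) (gB : {poly F}) (u : 'rV[F]_n)
    (dB : nat) :
  in_Rn n alpha A -> in_Rn n alpha B ->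
  defpoly n alpha B = map_poly (in_alg L) gB ->
  dual_spectrum alpha A u -> u != 0 ->
  (forall x y, cyclic_code n alpha B x -> cyclic_code n alpha B y -> x <> y ->
     (dB <= hdist setT x y)%N) ->
  has_locality (cyclic_code n alpha (prodset A B))
               (#|[set j | u 0 j != 0]| - dB + 1) dB.
Proof.
move=> ARn BRn Bg uA u_nz minB i.
have [j0 uj0] : exists j0, u 0 j0 != 0.
  apply/existsP; apply: contraNT u_nz => /existsPn u0.
  by apply/eqP/rowP => j; rewrite mxE; apply/eqP/negPn/u0.
set s := ord_sub j0 i; set S := [set j | rot u s 0 j != 0].
exists S; split.
- by rewrite inE mxE -{1}(ord_add_sub j0 i) ord_addK.
- by rewrite card_rot_support; lia.
move=> x y Cx Cy dxy_nz; set w := hadamard (rot u s) (x - y).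
have Cw : cyclic_code n alpha B w.
  apply: (code_of_roots alpha_prim Bg) => j Bj.
  apply: (hadamard_roots alpha_prim (dual_spectrum_rot alpha_prim s uA) _ Bj) => z ABz.
  have ABRn := in_Rn_prodset ARn BRn.
  by rewrite ev_sub !(code_roots alpha_prim ABRn _ ABz) ?subrr.
have dxy : hdist S x y = hdist setT w 0.
  apply: eq_card => j.
  by rewrite !inE !mxE mulf_eq0 negb_or subr_eq0.
rewrite dxy; apply: minB => // [|w0]; first exact: code0.
by apply: dxy_nz; rewrite dxy w0 /hdist; apply/eqP; rewrite cards_eq0;
   apply/eqP/setP => j; rewrite !inE eqxx.
Qed.

End Locality.

Theorem corollary3p5 (F : finFieldType) (L : fieldExtType F) (n d : nat)
  (alpha : L) (A B : seq L) (dAperp dB : nat) :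
  (0 < n)%N -> coprime n #|F| ->
  (* d is the multiplicative order of q = #|F| modulo n, and L = F_{q^d} *)
  (0 < d)%N -> (#|F| ^ d = 1 %[mod n])%N ->
  (forall k : nat, (0 < k < d)%N -> (#|F| ^ k != 1 %[mod n])%N) ->
  (\dim {: L} = d)%N ->
  n.-primitive_root alpha ->
  in_Rn n alpha A -> in_Rn n alpha B ->
  cyc_union #|F| (expset n alpha A) -> cyc_union #|F| (expset n alpha B) ->
  is_min_dist (dual_code (cyclic_code n alpha A)) dAperp ->
  is_min_dist (cyclic_code n alpha B) dB ->
  (dB < dAperp)%N ->
  cyc_union #|F| (expset n alpha (prodset A B)) /\
  has_locality (cyclic_code n alpha (prodset A B)) (dAperp - dB + 1) dB.
Proof.
move=> _ _ d_gt0 qd _ _ prim ARn BRn qA qB mindA [_ minB] _.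
split; first exact: prodset_closed.
have [gA Ag] := defpoly_over prim d_gt0 qd qA.
have [gB Bg] := defpoly_over prim d_gt0 qd qB.
have [u [Du u_nz <-]] := dual_min_word mindA.
exact: locality_from_dual_word ARn BRn Bg (dual_code_spectrum prim Ag Du) u_nz minB.
Qed.
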